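(* Let $a>0$, let $q$ be a continuous complex-valued function on $[-a,a]$, and for $h\in\mathbb{C}$ let $\mathbf{T}_h$ be the operator on $C[-a,a]$ defined in the context. Then for all $h_1,h_2\in\mathbb{C}$ and every $u\in C[-a,a]$, \[ \mathbf{T}_{h_2}u=\mathbf{T}_{h_1}\Big[u(x)+\frac{h_2-h_1}{2}\int_{-x}^{x}u(t)\,dt\Big]. \] In particular, with $T=\mathbf{T}_0$, \[ \mathbf{T}_{h}u=T\Big[u(x)+\frac{h}{2}\int_{-x}^{x}u(t)\,dt\Big]\quad\text{for all } h\in\mathbb{C},\ u\in C[-a,a]. \]
   Context: Let $H(u,v)$ be the unique (continuous) solution of the Goursat problem \[ \frac{\partial^2 H(u,v)}{\partial u\,\partial v}=q(u+v)H(u,v),\qquad H(u,0)=\frac12\int_0^u q(s)\,ds,\qquad H(0,v)=0, \] and put $K(x,t)=H\big(\tfrac{x+t}{2},\tfrac{x-t}{2}\big)$ for $-a\le x\le a$, $|t|\le|x|$. For $h\in\mathbb{C}$ define \[ \mathbf{K}(x,t;h)=\frac h2+K(x,t)+\frac h2\int_t^x\big(K(x,s)-K(x,-s)\big)\,ds, \qquad \mathbf{T}_h u(x)=u(x)+\int_{-x}^{x}\mathbf{K}(x,t;h)\,u(t)\,dt . \] Note $\mathbf{K}(x,t;0)=K(x,t)$, and $T:=\mathbf{T}_0$. *)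

From Stdlib Require Import Reals.
From Coquelicot Require Import Coquelicot.
Open Scope R_scope.

Definition CInt (f : R -> C) (a b : R) : C := @RInt C_R_CompleteNormedModule f a b.

Definition inI (a x : R) : Prop := - a <= x <= a.

Definition contOn (a : R) (f : R -> C) : Prop :=
  forall x, inI a x -> filterlim f (within (inI a) (locally x)) (locally (f x)).

(* Domain of the Goursat problem in the characteristic variables (u,v):
   u = (x+t)/2, v = (x-t)/2 with -a <= x <= a, |t| <= |x|,
   i.e. |u+v| <= a and u v >= 0. *)
Definition GDom (a u v : R) : Prop := Rabs (u + v) <= a /\ 0 <= u * v.

(* Its interior (where the PDE is required to hold classically). *)
Definition GInt (a u v : R) : Prop :=
  (0 < u /\ 0 < v /\ u + v < a) \/ (u < 0 /\ v < 0 /\ - a < u + v).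

(* H is a (continuous) solution of the Goursat problem
     d^2 H / du dv = q(u+v) H,  H(u,0) = 1/2 int_0^u q,  H(0,v) = 0. *)
Definition GoursatSol (a : R) (q : R -> C) (H : R -> R -> C) : Prop :=
  (forall u v, GDom a u v ->
     filterlim (fun p : R * R => H (fst p) (snd p))
       (within (fun p : R * R => GDom a (fst p) (snd p)) (locally (u, v)))
       (locally (H u v))) /\
  (exists Hv : R -> R -> C, forall u v, GInt a u v ->
     @is_derive R_AbsRing C_R_NormedModule (fun v' => H u v') v (Hv u v) /\
     @is_derive R_AbsRing C_R_NormedModule (fun u' => Hv u' v) u
        (Cmult (q (u + v)) (H u v))) /\
  (forall u, inI a u -> H u 0 = ((1 / 2) * CInt q 0 u)%C) /\
  (forall v, inI a v -> H 0 v = 0%C).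

Definition Kker (H : R -> R -> C) (x t : R) : C := H ((x + t) / 2) ((x - t) / 2).

Definition Kh (H : R -> R -> C) (h : C) (x t : R) : C :=
  (h / 2 + Kker H x t
   + h / 2 * CInt (fun s => Kker H x s - Kker H x (- s)) t x)%C.

Definition Th (H : R -> R -> C) (h : C) (u : R -> C) (x : R) : C :=
  (u x + CInt (fun t => Kh H h x t * u t) (- x) x)%C.

(* Fix x and write k = K(x, .), U(y) = int_{-y}^{y} u and F(t) = int_t^x (k(s) - k(-s)) ds, so
   that T_h u(x) = u(x) + int_{-x}^{x} (h/2 + k + (h/2) F) u.  Since U is odd and F is even,
   int U = int F U = 0, and U(x) = int u; expanding both sides, the identity reduces to
   int F u = int k U over [-x, x].  This comes from integrating
   (F U)' = -(k(t) - k(-t)) U + F (u(t) + u(-t)): the boundary term vanishes because F(x) = 0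
   and F is even, and the terms in k(-t) and u(-t) fold back under t |-> -t.  To do calculus on all of R, u and k are first composed with
   the retraction of R onto [-|x|, |x|], which changes neither side. *)

From Stdlib Require Import Reals Lra.
From Coquelicot Require Import Coquelicot.
Open Scope R_scope.

Local Notation Ccontinuous := (@continuous R_UniformSpace C_R_NormedModule).
Local Notation is_Cderive := (@is_derive R_AbsRing C_R_NormedModule).
Local Notation is_CInt := (@is_RInt C_R_NormedModule).

Lemma scal_C (r : R) (z : C) : scal (V := C_R_NormedModule) r z = (r * fst z, r * snd z).
Proof. now destruct z. Qed.

Lemma Cplus_diag_inj (z w : C) : (z + z)%C = (w + w)%C -> z = w.
Proof.
  destruct z as [z1 z2], w as [w1 w2]. intros E. injection E. intros.
  apply injective_projections; simpl; lra.
Qed.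

Lemma continuous_pair {U V W : UniformSpace} (f : U -> V) (g : U -> W) (x : U) :
  continuous f x -> continuous g x -> continuous (fun y => (f y, g y)) x.
Proof.
  intros Hf Hg. apply (continuous_comp_2 f g pair x Hf Hg).
  apply (filterlim_ext (fun p => p)); [now intros [] | apply continuous_id].
Qed.

Lemma Ccontinuous_components (f : R -> C) (t : R) :
  continuous (fun s => fst (f s)) t -> continuous (fun s => snd (f s)) t ->
  Ccontinuous f t.
Proof.
  intros H1 H2. apply (filterlim_ext (fun s => (fst (f s), snd (f s)))).
  - intros s. now destruct (f s).
  - exact (continuous_pair _ _ t H1 H2).
Qed.

Lemma continuous_Re (f : R -> C) (t : R) :
  Ccontinuous f t -> continuous (fun s => fst (f s)) t.
Proof. intros Hf. apply (continuous_comp f fst); [exact Hf | apply continuous_fst]. Qed.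

Lemma continuous_Im (f : R -> C) (t : R) :
  Ccontinuous f t -> continuous (fun s => snd (f s)) t.
Proof. intros Hf. apply (continuous_comp f snd); [exact Hf | apply continuous_snd]. Qed.

Lemma Ccontinuous_plus (f g : R -> C) (t : R) :
  Ccontinuous f t -> Ccontinuous g t -> Ccontinuous (fun s => f s + g s)%C t.
Proof. apply (continuous_plus (V := C_R_NormedModule)). Qed.

Lemma Ccontinuous_opp (f : R -> C) (t : R) :
  Ccontinuous f t -> Ccontinuous (fun s => - f s)%C t.
Proof. apply (continuous_opp (V := C_R_NormedModule)). Qed.

Lemma Ccontinuous_minus (f g : R -> C) (t : R) :
  Ccontinuous f t -> Ccontinuous g t -> Ccontinuous (fun s => f s - g s)%C t.
Proof. apply (continuous_minus (V := C_R_NormedModule)). Qed.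

Lemma Ccontinuous_mult (f g : R -> C) (t : R) :
  Ccontinuous f t -> Ccontinuous g t -> Ccontinuous (fun s => f s * g s)%C t.
Proof.
  intros Hf Hg.
  apply continuous_Re in Hf as Hf1; apply continuous_Im in Hf as Hf2.
  apply continuous_Re in Hg as Hg1; apply continuous_Im in Hg as Hg2.
  apply Ccontinuous_components; simpl.
  - apply (continuous_minus (V := R_NormedModule));
      apply (continuous_mult (K := R_AbsRing)); assumption.
  - apply (continuous_plus (V := R_NormedModule));
      apply (continuous_mult (K := R_AbsRing)); assumption.
Qed.

Lemma Ccontinuous_comp_opp (f : R -> C) (t : R) :
  Ccontinuous f (- t) -> Ccontinuous (fun s => f (- s)) t.
Proof.
  intros Hf. apply (continuous_comp (fun s => - s) f); [|exact Hf].
  apply (continuous_opp (V := R_NormedModule)), continuous_id.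
Qed.

Ltac Ccontinuity := repeat first
  [ match goal with H : forall z, continuous ?f z |- continuous ?f _ => apply H end
  | match goal with |- continuous (fun s => ?f (- s)) _ => apply (Ccontinuous_comp_opp f) end
  | match goal with |- continuous (fun s => (_ + _)%C) _ => apply Ccontinuous_plus end
  | match goal with |- continuous (fun s => (_ - _)%C) _ => apply Ccontinuous_minus end
  | match goal with |- continuous (fun s => (_ * _)%C) _ => apply Ccontinuous_mult end
  | match goal with |- continuous (fun s => (- _)%C) _ => apply Ccontinuous_opp end
  | apply continuous_const ].

Lemma is_Cderive_components (f : R -> C) (t : R) (d : C) :
  is_derive (fun s => fst (f s)) t (fst d) -> is_derive (fun s => snd (f s)) t (snd d) ->
  is_Cderive f t d.
Proof.
  intros H1 H2. unfold is_derive in *.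
  apply (filterdiff_ext (fun s => (fst (f s), snd (f s)))).
  { intros s. now destruct (f s). }
  apply (filterdiff_comp_2 _ _ pair _ _ pair H1 H2).
  apply filterdiff_linear, is_linear_prod; [apply is_linear_fst | apply is_linear_snd].
Qed.

Lemma is_derive_Re (f : R -> C) (t : R) (d : C) :
  is_Cderive f t d -> is_derive (fun s => fst (f s)) t (fst d).
Proof.
  intros H. unfold is_derive in *.
  apply (filterdiff_comp f fst _ fst H), filterdiff_linear, is_linear_fst.
Qed.

Lemma is_derive_Im (f : R -> C) (t : R) (d : C) :
  is_Cderive f t d -> is_derive (fun s => snd (f s)) t (snd d).
Proof.
  intros H. unfold is_derive in *.
  apply (filterdiff_comp f snd _ snd H), filterdiff_linear, is_linear_snd.
Qed.

Lemma is_Cderive_mult (f g : R -> C) (t : R) (df dg : C) :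
  is_Cderive f t df -> is_Cderive g t dg ->
  is_Cderive (fun s => f s * g s)%C t (df * g t + f t * dg)%C.
Proof.
  intros Hf Hg.
  apply is_derive_Re in Hf as Hf1; apply is_derive_Im in Hf as Hf2.
  apply is_derive_Re in Hg as Hg1; apply is_derive_Im in Hg as Hg2.
  assert (Hmult : forall (p q : R -> R) dp dq, is_derive p t dp -> is_derive q t dq ->
            is_derive (fun s => p s * q s) t (dp * q t + p t * dq)).
  { intros p q dp dq Hp Hq. apply (is_derive_mult p q t dp dq Hp Hq), Rmult_comm. }
  apply is_Cderive_components; simpl.
  - replace (_ + _) with ((fst df * fst (g t) + fst (f t) * fst dg)
                         - (snd df * snd (g t) + snd (f t) * snd dg)) by ring.
    apply (is_derive_minus (V := R_NormedModule)); apply Hmult; assumption.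
  - replace (_ + _) with ((fst df * snd (g t) + fst (f t) * snd dg)
                         + (snd df * fst (g t) + snd (f t) * fst dg)) by ring.
    apply (is_derive_plus (V := R_NormedModule)); apply Hmult; assumption.
Qed.

Lemma Ccontinuous_of_derive (f : R -> C) (t : R) (d : C) :
  is_Cderive f t d -> Ccontinuous f t.
Proof. intros H. apply ex_derive_continuous. now exists d. Qed.

Lemma is_CInt_mult_l (c : C) (f : R -> C) (a b : R) (l : C) :
  is_CInt f a b l -> is_CInt (fun t => c * f t)%C a b (c * l)%C.
Proof.
  intros H.
  assert (H1 := is_RInt_fct_extend_fst f a b l H).
  assert (H2 := is_RInt_fct_extend_snd f a b l H).
  apply is_RInt_fct_extend_pair; simpl.
  - apply (is_RInt_minus (V := R_NormedModule));
      apply (is_RInt_scal (V := R_NormedModule)); assumption.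
  - apply (is_RInt_plus (V := R_NormedModule));
      apply (is_RInt_scal (V := R_NormedModule)); assumption.
Qed.

Lemma CInt_unique (f : R -> C) (a b : R) (l : C) : is_CInt f a b l -> CInt f a b = l.
Proof. apply (is_RInt_unique (V := C_R_CompleteNormedModule)). Qed.

Lemma ex_CInt_continuous (f : R -> C) (a b : R) :
  (forall t, Ccontinuous f t) -> ex_RInt (V := C_R_NormedModule) f a b.
Proof. intros Hf. apply (ex_RInt_continuous (V := C_R_CompleteNormedModule)). intros; apply Hf. Qed.

Lemma CInt_correct (f : R -> C) (a b : R) :
  (forall t, Ccontinuous f t) -> is_CInt f a b (CInt f a b).
Proof. intros Hf. apply (RInt_correct (V := C_R_CompleteNormedModule)), ex_CInt_continuous, Hf. Qed.

Lemma CInt_comp_opp (f : R -> C) (x : R) :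
  (forall t, Ccontinuous f t) -> CInt (fun t => f (- t)) (- x) x = CInt f (- x) x.
Proof.
  intros Hf. apply CInt_unique.
  apply (is_RInt_ext (fun t => opp (opp (f (- t))))).
  { intros t _. apply (opp_opp (G := C_R_NormedModule)). }
  apply (is_RInt_comp_opp (fun t => opp (f t))). rewrite Ropp_involutive.
  rewrite <- (opp_opp (G := C_R_NormedModule) (CInt f (- x) x)).
  apply (is_RInt_swap (V := C_R_NormedModule)), (is_RInt_opp (V := C_R_NormedModule)).
  apply CInt_correct, Hf.
Qed.

Lemma CInt_odd (f : R -> C) (x : R) :
  (forall t, Ccontinuous f t) -> (forall t, f (- t) = (- f t)%C) ->
  CInt f (- x) x = 0%C.
Proof.
  intros Hf Hodd.
  assert (E : CInt (fun t => f (- t)) (- x) x = (- CInt f (- x) x)%C).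
  { apply CInt_unique, (is_RInt_ext (fun t => opp (f t))).
    - intros t _. now rewrite Hodd.
    - apply (is_RInt_opp (V := C_R_NormedModule)), CInt_correct, Hf. }
  rewrite CInt_comp_opp in E by exact Hf.
  destruct (CInt f (- x) x) as [p q]. injection E. intros Eq Ep.
  apply injective_projections; simpl; lra.
Qed.

Ltac CInt_linear := repeat first
  [ match goal with |- is_RInt _ _ _ (CInt _ _ _) => apply CInt_correct; intros; Ccontinuity end
  | match goal with |- is_RInt _ _ _ (_ + _)%C => apply (is_RInt_plus (V := C_R_NormedModule)) end
  | match goal with |- is_RInt _ _ _ (_ - _)%C => apply (is_RInt_minus (V := C_R_NormedModule)) end
  | match goal with |- is_RInt _ _ _ (- _)%C => apply (is_RInt_opp (V := C_R_NormedModule)) end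
  | match goal with |- is_RInt _ _ _ (_ * _)%C => apply is_CInt_mult_l end ].

(* [ring] on equalities whose type is displayed as a normed-module carrier rather than [C] *)
Ltac Cring := cbv beta; match goal with |- ?a = ?b => change (@eq C a b); ring end.

Lemma is_CInt_parts (f g df dg : R -> C) (a b : R) :
  (forall t, is_Cderive f t (df t)) -> (forall t, is_Cderive g t (dg t)) ->
  (forall t, Ccontinuous df t) -> (forall t, Ccontinuous dg t) ->
  is_CInt (fun t => df t * g t + f t * dg t)%C a b (f b * g b - f a * g a)%C.
Proof.
  intros Hf Hg Hdf Hdg.
  assert (Cf : forall t, Ccontinuous f t) by (intros t; exact (Ccontinuous_of_derive _ _ _ (Hf t))).
  assert (Cg : forall t, Ccontinuous g t) by (intros t; exact (Ccontinuous_of_derive _ _ _ (Hg t))).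
  apply (is_RInt_derive (V := C_R_CompleteNormedModule) (fun t => f t * g t)%C).
  - intros t _. apply is_Cderive_mult; auto.
  - intros t _. Ccontinuity.
Qed.

Definition symInt (u : R -> C) (y : R) : C := CInt u (- y) y.

Definition tailInt (k : R -> C) (x t : R) : C := CInt (fun s => k s - k (- s)%R)%C t x.

Definition transmutation (k : R -> C) (h : C) (x : R) (v : R -> C) : C :=
  (v x + CInt (fun t => (h / 2 + k t + h / 2 * tailInt k x t) * v t) (- x) x)%C.

Section Shift.

Variables (k u : R -> C) (x : R).
Hypothesis (Ck : forall t, Ccontinuous k t) (Cu : forall t, Ccontinuous u t).

Lemma is_derive_symInt (t : R) : is_Cderive (symInt u) t (u t + u (- t)%R)%C.
Proof.
  replace (u t + u (- t)%R)%C
    with (minus (scal 1 (u t)) (scal (-1) (u (- t))) : C_R_NormedModule).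
  - apply (is_derive_RInt_bound_comp (V := C_R_NormedModule) u (CInt u)).
    + apply filter_forall. intros; apply CInt_correct, Cu.
    + apply Cu.
    + apply Cu.
    + apply (is_derive_opp (V := R_NormedModule)), (is_derive_id (K := R_AbsRing)).
    + apply (is_derive_id (K := R_AbsRing)).
  - rewrite !scal_C. apply injective_projections; simpl; unfold plus, opp; simpl; ring.
Qed.

Lemma is_derive_tailInt (t : R) : is_Cderive (tailInt k x) t (- (k t - k (- t)%R))%C.
Proof.
  apply (is_derive_RInt' (V := C_R_NormedModule) (fun s => k s - k (- s)%R)%C (tailInt k x) t x).
  - apply filter_forall. intros; apply CInt_correct. intros; Ccontinuity.
  - Ccontinuity.
Qed.

Lemma Ccontinuous_symInt (t : R) : Ccontinuous (symInt u) t.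
Proof. exact (Ccontinuous_of_derive _ _ _ (is_derive_symInt t)). Qed.

Lemma Ccontinuous_tailInt (t : R) : Ccontinuous (tailInt k x) t.
Proof. exact (Ccontinuous_of_derive _ _ _ (is_derive_tailInt t)). Qed.

Lemma symInt_opp (y : R) : symInt u (- y) = (- symInt u y)%C.
Proof.
  unfold symInt. rewrite Ropp_involutive.
  symmetry. apply (opp_RInt_swap (V := C_R_CompleteNormedModule)), ex_CInt_continuous, Cu.
Qed.

Lemma tailInt_opp (t : R) : tailInt k x (- t) = tailInt k x t.
Proof.
  set (D := fun s => (k s - k (- s)%R)%C).
  assert (CD : forall t, Ccontinuous D t) by (intros; unfold D; Ccontinuity).
  unfold tailInt; fold D.
  transitivity (CInt D (- t) t + CInt D t x)%C.
  - symmetry. apply (RInt_Chasles (V := C_R_CompleteNormedModule)); apply ex_CInt_continuous, CD.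
  - rewrite (CInt_odd D t CD); [ring|].
    intros s. unfold D. rewrite Ropp_involutive. ring.
Qed.

Lemma tailInt_self : tailInt k x x = 0%C.
Proof. apply (RInt_point (V := C_R_CompleteNormedModule)). Qed.

Lemma CInt_tailInt_mult : CInt (fun t => tailInt k x t * u t)%C (- x) x
                          = CInt (fun t => k t * symInt u t)%C (- x) x.
Proof.
  set (F := tailInt k x). set (U := symInt u).
  assert (CF : forall t, Ccontinuous F t) by exact Ccontinuous_tailInt.
  assert (CU : forall t, Ccontinuous U t) by exact Ccontinuous_symInt.
  assert (Boundary : (F x * U x - F (- x)%R * U (- x)%R)%C = RtoC 0).
  { unfold F. rewrite tailInt_opp, tailInt_self. ring. }
  assert (Parts := is_CInt_parts F U (fun t => - (k t - k (- t)%R))%C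
                     (fun t => u t + u (- t)%R)%C (- x) x
                     is_derive_tailInt is_derive_symInt
                     ltac:(intros; Ccontinuity) ltac:(intros; Ccontinuity)).
  assert (Reflect_kU : CInt (fun t => k (- t)%R * U t)%C (- x) x
                       = (- CInt (fun t => k t * U t) (- x) x)%C).
  { rewrite <- (CInt_comp_opp (fun t => k t * U t)%C) by (intros; Ccontinuity).
    rewrite <- (RInt_opp (V := C_R_CompleteNormedModule))
      by (apply ex_CInt_continuous; intros; Ccontinuity).
    apply (RInt_ext (V := C_R_CompleteNormedModule)). intros t _.
    unfold U. rewrite symInt_opp. change (opp ?z) with (- z)%C. Cring. }
  assert (Reflect_Fu : CInt (fun t => F t * u (- t)%R)%C (- x) x
                       = CInt (fun t => F t * u t)%C (- x) x).
  { rewrite <- (CInt_comp_opp (fun t => F t * u t)%C) by (intros; Ccontinuity).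
    apply (RInt_ext (V := C_R_CompleteNormedModule)). intros t _.
    unfold F. now rewrite tailInt_opp. }
  assert (Expand : is_CInt (fun t => - (k t - k (- t)%R) * U t + F t * (u t + u (- t)%R))%C (- x) x
     (- (CInt (fun t => k t * U t) (- x) x - CInt (fun t => k (- t)%R * U t) (- x) x)
      + (CInt (fun t => F t * u t) (- x) x + CInt (fun t => F t * u (- t)%R) (- x) x))%C).
  { apply (is_RInt_ext
      (fun t => - (k t * U t - k (- t)%R * U t) + (F t * u t + F t * u (- t)%R))%C).
    - intros t _. Cring.
    - CInt_linear. }
  apply CInt_unique in Parts. apply CInt_unique in Expand.
  rewrite Parts, Boundary, Reflect_kU, Reflect_Fu in Expand.
  set (A := CInt (fun t => k t * U t)%C (- x) x) in *.
  set (B := CInt (fun t => F t * u t)%C (- x) x) in *.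
  apply Cplus_diag_inj.
  replace (B + B)%C with (A + A + (- (A - - A) + (B + B)))%C by ring.
  rewrite <- Expand. ring.
Qed.

Lemma transmutation_shift (h1 h2 : C) :
  transmutation k h2 x u
  = transmutation k h1 x (fun y => u y + (h2 - h1) / 2 * symInt u y)%C.
Proof.
  assert (Key := CInt_tailInt_mult).
  assert (CF : forall t, Ccontinuous (tailInt k x) t) by exact Ccontinuous_tailInt.
  assert (CU : forall t, Ccontinuous (symInt u) t) by exact Ccontinuous_symInt.
  unfold transmutation.
  set (F := tailInt k x) in *. set (U := symInt u) in *. set (c := ((h2 - h1) / 2)%C).
  assert (IU : CInt U (- x) x = RtoC 0) by exact (CInt_odd U x CU symInt_opp).
  assert (IFU : CInt (fun t => F t * U t)%C (- x) x = RtoC 0).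
  { apply CInt_odd; [intros; Ccontinuity|].
    intros t. unfold F, U. rewrite tailInt_opp, symInt_opp. ring. }
  assert (Lhs : CInt (fun t => (h2 / 2 + k t + h2 / 2 * F t) * u t)%C (- x) x
    = (h2 / 2 * CInt u (- x) x + CInt (fun t => k t * u t)%C (- x) x
       + h2 / 2 * CInt (fun t => F t * u t)%C (- x) x)%C).
  { apply CInt_unique.
    apply (is_RInt_ext (fun t => h2 / 2 * u t + k t * u t + h2 / 2 * (F t * u t))%C).
    - intros t _. Cring.
    - CInt_linear. }
  assert (Rhs : CInt (fun t => (h1 / 2 + k t + h1 / 2 * F t) * (u t + c * U t))%C (- x) x
    = (h1 / 2 * CInt u (- x) x + CInt (fun t => k t * u t)%C (- x) x
       + h1 / 2 * CInt (fun t => F t * u t)%C (- x) x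
       + c * (h1 / 2 * CInt U (- x) x + CInt (fun t => k t * U t)%C (- x) x
              + h1 / 2 * CInt (fun t => F t * U t)%C (- x) x))%C).
  { apply CInt_unique.
    apply (is_RInt_ext (fun t => h1 / 2 * u t + k t * u t + h1 / 2 * (F t * u t)
        + c * (h1 / 2 * U t + k t * U t + h1 / 2 * (F t * U t)))%C).
    - intros t _. Cring.
    - CInt_linear. }
  rewrite Lhs, Rhs, IU, IFU, <- Key. unfold c, U, symInt. unfold Cdiv, Cminus. ring.
Qed.

End Shift.

Lemma CInt_ext_on (f g : R -> C) (b t1 t2 : R) :
  (forall s, - b <= s <= b -> f s = g s) -> - b <= t1 <= b -> - b <= t2 <= b ->
  CInt f t1 t2 = CInt g t1 t2.
Proof.
  intros E H1 H2. apply (RInt_ext (V := C_R_CompleteNormedModule)). intros s Hs.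
  apply E. unfold Rmin, Rmax in Hs. destruct (Rle_dec t1 t2); lra.
Qed.

Lemma symInt_ext_on (u v : R -> C) (b y : R) :
  (forall s, - b <= s <= b -> u s = v s) -> - b <= y <= b -> symInt u y = symInt v y.
Proof. intros E Hy. apply (CInt_ext_on _ _ b); auto; lra. Qed.

Lemma transmutation_ext_on (k l : R -> C) (h : C) (b x : R) (v w : R -> C) :
  (forall s, - b <= s <= b -> k s = l s) -> (forall s, - b <= s <= b -> v s = w s) ->
  - b <= x <= b -> transmutation k h x v = transmutation l h x w.
Proof.
  intros Ekl Evw Hx. unfold transmutation, tailInt.
  rewrite (Evw x Hx). f_equal.
  apply (CInt_ext_on _ _ b); [|lra|lra]. intros t Ht.
  rewrite Ekl, Evw by lra. do 3 f_equal.
  apply (CInt_ext_on _ _ b); [|lra|lra]. intros s Hs.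
  rewrite !Ekl by lra. reflexivity.
Qed.

(* The retraction of R onto [-b, b], written with [Rabs] so that continuity is immediate. *)
Definition clamp (b t : R) : R := (Rabs (t + b) - Rabs (t - b)) / 2.

Lemma clamp_bound (b t : R) : 0 <= b -> - b <= clamp b t <= b.
Proof. intros. unfold clamp. split_Rabs; lra. Qed.

Lemma clamp_id (b t : R) : - b <= t <= b -> clamp b t = t.
Proof. intros. unfold clamp. split_Rabs; lra. Qed.

Lemma continuous_clamp (b t : R) : continuous (clamp b) t.
Proof.
  unfold clamp, Rdiv.
  apply (continuous_mult (K := R_AbsRing) _ (fun _ => / 2)); [|apply continuous_const].
  apply (continuous_minus (V := R_NormedModule)); apply continuous_Rabs_comp;
    [apply (continuous_plus (V := R_NormedModule)) | apply (continuous_minus (V := R_NormedModule))];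
    apply continuous_id || apply continuous_const.
Qed.

Lemma continuous_comp_within {U V W : UniformSpace} (g : U -> V) (f : V -> W)
    (P : V -> Prop) (z : U) :
  (forall s, P (g s)) -> continuous g z ->
  filterlim f (within P (locally (g z))) (locally (f (g z))) ->
  continuous (fun s => f (g s)) z.
Proof.
  intros HP Hg Hf. apply (filterlim_comp _ _ _ g f _ (within P (locally (g z)))); [|exact Hf].
  intros Q HQ. apply Hg in HQ. unfold filtermap in *.
  revert HQ. apply filter_imp. intros s Hs. apply Hs, HP.
Qed.

Lemma Ccontinuous_clamp_contOn (a : R) (u : R -> C) (b t : R) :
  contOn a u -> 0 <= b <= a -> Ccontinuous (fun s => u (clamp b s)) t.
Proof.
  intros Hu Hb. apply (continuous_comp_within (clamp b) u (inI a)).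
  - intros s. generalize (clamp_bound b s (proj1 Hb)). unfold inI. lra.
  - apply continuous_clamp.
  - apply Hu. generalize (clamp_bound b t (proj1 Hb)). unfold inI. lra.
Qed.

Lemma Ccontinuous_clamp_Kker (a : R) (q : R -> C) (H : R -> R -> C) (x t : R) :
  GoursatSol a q H -> inI a x -> Ccontinuous (fun s => Kker H x (clamp (Rabs x) s)) t.
Proof.
  intros [HH _] Hx.
  set (g := fun s => ((x + clamp (Rabs x) s) / 2, (x - clamp (Rabs x) s) / 2)).
  assert (Gg : forall s, GDom a (fst (g s)) (snd (g s))).
  { intros s. generalize (clamp_bound (Rabs x) s (Rabs_pos x)). unfold GDom, inI, g in *; simpl.
    intros Hs. replace ((x + _) / 2 + (x - _) / 2) with x by field.
    split; split_Rabs; nra. }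
  apply (continuous_comp_within g (fun p => H (fst p) (snd p)) (fun p => GDom a (fst p) (snd p))).
  - exact Gg.
  - unfold g, Rdiv. apply continuous_pair;
      apply (continuous_mult (K := R_AbsRing) _ (fun _ => / 2)); try apply continuous_const;
      [apply (continuous_plus (V := R_NormedModule)) | apply (continuous_minus (V := R_NormedModule))];
      apply continuous_const || apply continuous_clamp.
  - apply HH, Gg.
Qed.

Lemma Th_transmutation (H : R -> R -> C) (h : C) (u : R -> C) (x : R) :
  Th H h u x = transmutation (Kker H x) h x u.
Proof. reflexivity. Qed.

Lemma Th_shift (a : R) (q : R -> C) (H : R -> R -> C) (h1 h2 : C) (u : R -> C) (x : R) :
  GoursatSol a q H -> contOn a u -> inI a x ->
  Th H h2 u x = Th H h1 (fun y => u y + (h2 - h1) / 2 * CInt u (- y) y)%C x.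
Proof.
  intros HG Hu Hx.
  set (b := Rabs x).
  assert (Hxb : - b <= x <= b) by (unfold b; split_Rabs; lra).
  assert (Hba : 0 <= b <= a) by (unfold b, inI in *; split_Rabs; lra).
  set (k' := fun s => Kker H x (clamp b s)).
  set (u' := fun s => u (clamp b s)).
  assert (Ek : forall s, - b <= s <= b -> k' s = Kker H x s)
    by (intros; unfold k'; now rewrite clamp_id).
  assert (Eu : forall s, - b <= s <= b -> u' s = u s) by (intros; unfold u'; now rewrite clamp_id).
  rewrite !Th_transmutation.
  rewrite <- (transmutation_ext_on k' _ h2 b x u' u Ek Eu Hxb).
  assert (Ck' : forall t, Ccontinuous k' t)
    by (intros; exact (Ccontinuous_clamp_Kker a q H x t HG Hx)).
  assert (Cu' : forall t, Ccontinuous u' t)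
    by (intros; exact (Ccontinuous_clamp_contOn a u b t Hu Hba)).
  rewrite (transmutation_shift k' u' x Ck' Cu' h1 h2).
  apply (transmutation_ext_on _ _ h1 b); auto.
  intros s Hs. rewrite Eu by exact Hs. f_equal. f_equal. apply (symInt_ext_on _ _ b); auto.
Qed.

Theorem mainTheorem2 :
  forall (a : R) (q : R -> C) (H : R -> R -> C),
    0 < a -> contOn a q -> GoursatSol a q H ->
    (forall (h1 h2 : C) (u : R -> C), contOn a u ->
       forall x, inI a x ->
         Th H h2 u x
         = Th H h1 (fun y => (u y + (h2 - h1) / 2 * CInt u (- y) y)%C) x) /\
    (forall (h : C) (u : R -> C), contOn a u ->
       forall x, inI a x ->
         Th H h u x
         = Th H 0%C (fun y => (u y + h / 2 * CInt u (- y) y)%C) x).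
Proof.
  intros a q H _ _ HG. split.
  - intros h1 h2 u Hu x Hx. exact (Th_shift a q H h1 h2 u x HG Hu Hx).
  - intros h u Hu x Hx. rewrite (Th_shift a q H 0%C h u x HG Hu Hx).
    replace ((h - 0) / 2)%C with (h / 2)%C by (unfold Cdiv, Cminus; ring).
    reflexivity.
Qed.
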